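(* Let $P=(X,\prec)$ be a finite twin-free interval order with no induced subposet isomorphic to $Z$. Let $\mathcal I=\{I(z)=[L(z),R(z)]:z\in X\}$ be a closed interval representation of $P$ such that (1) no interval strictly contains two other intervals, (2) no interval is strictly contained in two other intervals, (3) whenever $I(u)\subsetneq I(v)$ there are unique $x,y\in X$ with $x$ peeking into $vu$ from the left and $y$ peeking into $vu$ from the right, and moreover all peekers have been retracted, i.e. $\mathcal I$ was obtained from such a representation by, for every proper inclusion $I(u)\subsetneq I(v)$, replacing the interval of its left peeker $x$ by $[L(x),L(v)]$ and the interval of its right peeker $y$ by $[R(v),R(y)]$. For each proper inclusion $I(u)\subsetneq I(v)$, replace $I(u)$ by the open interval $(L(v),R(v))$ (leaving intervals of elements that are not inner intervals of a proper inclusion unchanged). Then the resulting set of intervals is a strict OC interval representation of $P$.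
   Context: Posets are strict (irreflexive) partial orders; twins are points with exactly the same comparabilities; twin-free means no two distinct twins. A closed interval representation assigns a closed real interval $[L(x),R(x)]$ to each $x$ with $x\prec y$ iff $R(x)<L(y)$; $P$ is an interval order if one exists. $I(u)$ is strictly contained in $I(v)$ if $I(u)\subset I(v)$ and they do not have identical endpoints. For $I(u)\subsetneq I(v)$: $x$ peeks into $vu$ if $I(x)$ meets $I(v)$ but not $I(u)$; from the left if moreover $R(x)\le L(u)$; from the right if moreover $R(u)\le L(x)$. An OC interval representation assigns to each $x$ an open or closed real interval $I(x)$ with $x\prec y$ iff every point of $I(x)$ is less than every point of $I(y)$; it is strict if no interval is strictly contained in another. $Z$ is the poset on $a,b,c,d,x,y$ with $a\prec b\prec c\prec d$, $x\prec d$, $a\prec y$ (and transitive consequences), all other pairs incomparable. *)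

From mathcomp Require Import all_boot.
From Stdlib Require Import Reals.
Set Implicit Arguments. Unset Strict Implicit. Unset Printing Implicit Defensive.
Local Open Scope R_scope.

Section Posets.
Variable X : finType.
Variable prec : X -> X -> Prop.

Definition strict_poset : Prop :=
  (forall x, ~ prec x x) /\ (forall x y z, prec x y -> prec y z -> prec x z).

Definition twins (x y : X) : Prop :=
  forall z, (prec x z <-> prec y z) /\ (prec z x <-> prec z y).

Definition twin_free : Prop := forall x y, twins x y -> x = y.

Definition closed_rep (L Rr : X -> R) : Prop :=
  (forall x, L x <= Rr x) /\ (forall x y, prec x y <-> Rr x < L y).

Definition interval_order : Prop := exists L Rr, closed_rep L Rr.
End Posets.

(* The poset Z on {a,b,c,d,x,y}: a<b<c<d, x<d, a<y, plus transitive consequences *)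
Inductive Zpt := Za | Zb | Zc | Zd | Zx | Zy.

Definition Zrel (p q : Zpt) : Prop :=
  match p, q with
  | Za, Zb | Za, Zc | Za, Zd | Zb, Zc | Zb, Zd | Zc, Zd => True
  | Zx, Zd => True
  | Za, Zy => True
  | _, _ => False
  end.

Definition contains_Z (X : finType) (prec : X -> X -> Prop) : Prop :=
  exists f : Zpt -> X, (forall p q, f p = f q -> p = q) /\
    (forall p q, Zrel p q <-> prec (f p) (f q)).

Section Closed.
Variable X : Type.
Variables L Rr : X -> R.

Definition cstrict_sub (u v : X) : Prop :=
  L v <= L u /\ Rr u <= Rr v /\ (L u <> L v \/ Rr u <> Rr v).

Definition cmeets (x y : X) : Prop := L x <= Rr y /\ L y <= Rr x.

Definition peeks (x v u : X) : Prop := cmeets x v /\ ~ cmeets x u.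
Definition peeks_left (x v u : X) : Prop := peeks x v u /\ Rr x <= L u.
Definition peeks_right (x v u : X) : Prop := peeks x v u /\ Rr u <= L x.

Definition no_two_inside : Prop :=
  ~ exists v u1 u2, u1 <> u2 /\ cstrict_sub u1 v /\ cstrict_sub u2 v.
Definition no_two_outside : Prop :=
  ~ exists u v1 v2, v1 <> v2 /\ cstrict_sub u v1 /\ cstrict_sub u v2.
Definition unique_peekers : Prop :=
  forall u v, cstrict_sub u v ->
    (exists x, peeks_left x v u /\ forall x', peeks_left x' v u -> x' = x) /\
    (exists y, peeks_right y v u /\ forall y', peeks_right y' v u -> y' = y).

Definition good_rep : Prop := no_two_inside /\ no_two_outside /\ unique_peekers.
End Closed.

Definition retracted_from (X : Type) (L0 R0 L Rr : X -> R) : Prop :=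
  (forall u v x, cstrict_sub L0 R0 u v -> peeks_left L0 R0 x v u ->
     L x = L0 x /\ Rr x = L0 v) /\
  (forall u v y, cstrict_sub L0 R0 u v -> peeks_right L0 R0 y v u ->
     L y = R0 v /\ Rr y = R0 y) /\
  (forall z, ~ (exists u v, cstrict_sub L0 R0 u v /\
                  (peeks_left L0 R0 z v u \/ peeks_right L0 R0 z v u)) ->
     L z = L0 z /\ Rr z = R0 z).

Record oc_interval := OC { oc_open : bool; oc_l : R; oc_r : R }.

Definition oc_wf (I : oc_interval) : Prop :=
  if oc_open I then oc_l I < oc_r I else oc_l I <= oc_r I.

Definition in_oc (p : R) (I : oc_interval) : Prop :=
  if oc_open I then oc_l I < p < oc_r I else oc_l I <= p <= oc_r I.

Definition oc_strict_sub (A B : oc_interval) : Prop :=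
  (forall p, in_oc p A -> in_oc p B) /\ (oc_l A <> oc_l B \/ oc_r A <> oc_r B).

Definition oc_rep (X : Type) (prec : X -> X -> Prop) (J : X -> oc_interval) : Prop :=
  (forall x, oc_wf (J x)) /\
  (forall x y, prec x y <->
     (forall p q, in_oc p (J x) -> in_oc q (J y) -> p < q)).

Definition strict_oc_rep (X : Type) (prec : X -> X -> Prop) (J : X -> oc_interval) : Prop :=
  oc_rep prec J /\ (forall u v, ~ oc_strict_sub (J u) (J v)).

(** If [u] is strictly inside [v] and [z] lies above [u] but not above [v],
    then in the original representation [z] peeks into [vu] from the right, so
    after retraction its interval starts exactly at [R(v)]; dually on the left.
    Hence whatever lies above or below an inner element [u] at worst touches the
    open interval [(L(v), R(v))], so comparabilities survive, and since the new
    intervals only grow, incomparabilities do too.  The one delicate case, an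
    inner [x] below an inner [y] but not below the interval [w] around [y],
    forces two intervals inside, or around, a third one, or an induced copy of
    [Z].  A strict inclusion among the new intervals likewise yields two
    intervals strictly inside, or strictly around, a third one. *)

From mathcomp Require Import all_boot.
From Stdlib Require Import Reals Lra Classical.
Set Implicit Arguments.
Unset Strict Implicit.
Local Open Scope R_scope.

Lemma oc_before_iff (A B : oc_interval) : oc_wf A -> oc_wf B ->
  ((forall p q, in_oc p A -> in_oc q B -> p < q) <->
   (if oc_open A || oc_open B then oc_r A <= oc_l B else oc_r A < oc_l B)).
Proof.
  destruct A as [[|] la ra], B as [[|] lb rb]; unfold oc_wf, in_oc; simpl;
    intros HA HB; (split; [intro H | intros H p q Hp Hq; lra]).
  - apply Rnot_lt_le; intro Hlt.
    destruct (Rlt_dec la rb).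
    + destruct (Rle_dec la lb), (Rle_dec ra rb).
      * specialize (H ((lb+ra)/2) ((lb+ra)/2)); lra.
      * specialize (H ((lb+rb)/2) ((lb+rb)/2)); lra.
      * specialize (H ((la+ra)/2) ((la+ra)/2)); lra.
      * specialize (H ((la+rb)/2) ((la+rb)/2)); lra.
    + specialize (H ((la+ra)/2) ((lb+rb)/2)); lra.
  - apply Rnot_lt_le; intro Hlt.
    destruct (Rle_dec la lb).
    + specialize (H ((lb+ra)/2) lb); lra.
    + specialize (H ((la+ra)/2) lb); lra.
  - apply Rnot_lt_le; intro Hlt.
    destruct (Rle_dec ra rb).
    + specialize (H ra ((lb+ra)/2)); lra.
    + specialize (H ra ((lb+rb)/2)); lra.
  - specialize (H ra lb); lra.
Qed.

Lemma oc_sub_endpoints (A B : oc_interval) : oc_wf A ->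
  (forall p, in_oc p A -> in_oc p B) ->
  oc_l B <= oc_l A /\ oc_r A <= oc_r B /\
  (oc_open B = true -> oc_open A = false -> oc_l B < oc_l A /\ oc_r A < oc_r B).
Proof.
  destruct A as [[|] la ra], B as [[|] lb rb]; unfold oc_wf, in_oc; simpl;
    intros HA H.
  1, 2: split; [|split; [|discriminate]]; apply Rnot_lt_le; intro Hlt.
  - destruct (Rle_dec lb ra).
    + specialize (H ((la+lb)/2)); lra.
    + specialize (H ((la+ra)/2)); lra.
  - destruct (Rle_dec la rb).
    + specialize (H ((rb+ra)/2)); lra.
    + specialize (H ((la+ra)/2)); lra.
  - destruct (Rle_dec lb ra).
    + specialize (H ((la+lb)/2)); lra.
    + specialize (H ((la+ra)/2)); lra.
  - destruct (Rle_dec la rb).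
    + specialize (H ((rb+ra)/2)); lra.
    + specialize (H ((la+ra)/2)); lra.
  - pose proof (H la); pose proof (H ra); repeat split; lra.
  - pose proof (H la); pose proof (H ra); repeat split; try lra; discriminate.
Qed.

Lemma Zrel_twin_free (p q : Zpt) : (forall r, Zrel p r <-> Zrel q r) ->
  (forall r, Zrel r p <-> Zrel r q) -> p = q.
Proof.
  intros H1 H2.
  pose proof (H1 Zb); pose proof (H1 Zc); pose proof (H1 Zd); pose proof (H1 Zy).
  pose proof (H2 Za); pose proof (H2 Zb); pose proof (H2 Zc); pose proof (H2 Zd).
  destruct p, q; simpl in *; tauto.
Qed.

Lemma contains_Z_of_embedding (X : finType) (prec : X -> X -> Prop)
  (f : Zpt -> X) : (forall p q, Zrel p q <-> prec (f p) (f q)) -> contains_Z prec.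
Proof.
  intro Hf; exists f; split; [|exact Hf].
  intros p q e; apply Zrel_twin_free; intro r; rewrite !Hf e; tauto.
Qed.

Lemma retracted_sub (X : Type) (L0 R0 L Rr : X -> R) :
  retracted_from L0 R0 L Rr -> forall z, L0 z <= L z /\ Rr z <= R0 z.
Proof.
  intros [Hleft [Hright Hrest]] z.
  destruct (classic (exists u v, cstrict_sub L0 R0 u v /\
              (peeks_left L0 R0 z v u \/ peeks_right L0 R0 z v u)))
    as [[u [v [Huv [Hp|Hp]]]] | Hn].
  - destruct (Hleft u v z Huv Hp), Hp as [[[] _] _]; lra.
  - destruct (Hright u v z Huv Hp), Hp as [[[] _] _]; lra.
  - destruct (Hrest z Hn); lra.
Qed.

Lemma closed_rep_nprec (X : finType) (prec : X -> X -> Prop) (L Rr : X -> R) :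
  closed_rep prec L Rr -> forall x y, ~ prec x y <-> L y <= Rr x.
Proof.
  intros [_ Hp] x y; rewrite Hp; split; [apply Rnot_lt_le | lra].
Qed.

Section Retraction.

Variable X : finType.
Variable prec : X -> X -> Prop.
Variables L Rr : X -> R.
Hypothesis Hrep : closed_rep prec L Rr.

Lemma peeks_left_prec (z v u : X) : peeks_left L Rr z v u ->
  prec z u /\ ~ prec z v.
Proof.
  destruct Hrep as [Hw Hp]; intros [[Hmeet Hn] Hle].
  pose proof (Hw u); pose proof (Hw z); unfold cmeets in Hmeet, Hn.
  rewrite !Hp; repeat split; lra.
Qed.

Lemma peeks_right_prec (z v u : X) : peeks_right L Rr z v u ->
  prec u z /\ ~ prec v z.
Proof.
  destruct Hrep as [Hw Hp]; intros [[Hmeet Hn] Hle].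
  pose proof (Hw u); pose proof (Hw z); unfold cmeets in Hmeet, Hn.
  rewrite !Hp; repeat split; lra.
Qed.

Hypothesis Hpeek : unique_peekers L Rr.

(* The peekers witness the inclusion order-theoretically, so every closed
   representation of [prec] nests [u] strictly inside [v] on both sides. *)
Lemma inner_strict (L' R' : X -> R) (u v : X) : closed_rep prec L' R' ->
  cstrict_sub L Rr u v -> L' v < L' u /\ R' u < R' v.
Proof.
  intros Hrep' Huv.
  destruct (Hpeek Huv) as [[x [Hx _]] [y [Hy _]]].
  destruct (peeks_left_prec Hx) as [Hxu Hxv].
  destruct (peeks_right_prec Hy) as [Huy Hvy].
  apply (proj2 Hrep') in Hxu; apply (proj2 Hrep') in Huy.
  apply (closed_rep_nprec Hrep') in Hxv; apply (closed_rep_nprec Hrep') in Hvy.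
  pose proof (proj1 Hrep' u); lra.
Qed.

Variables L0 R0 : X -> R.
Hypothesis Hrep0 : closed_rep prec L0 R0.
Hypothesis Hret : retracted_from L0 R0 L Rr.

Lemma right_peeker_L_eq (u v z : X) :
  cstrict_sub L Rr u v -> prec u z -> ~ prec v z -> L z = Rr v.
Proof.
  intros Huv Huz Hvz.
  destruct (inner_strict Hrep0 Huv), (inner_strict Hrep Huv).
  pose proof (proj1 Hrep u); pose proof (proj1 Hrep0 u); pose proof (proj1 Hrep z).
  pose proof (retracted_sub Hret v).
  assert (Hzv : ~ prec z v).
  { intro Hzv; apply (proj2 Hrep) in Hzv; apply (proj2 Hrep) in Huz; lra. }
  pose proof (proj1 (closed_rep_nprec Hrep v z) Hvz).
  apply (closed_rep_nprec Hrep0) in Hvz; apply (closed_rep_nprec Hrep0) in Hzv.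
  apply (proj2 Hrep0) in Huz.
  assert (Huv0 : cstrict_sub L0 R0 u v) by (unfold cstrict_sub; lra).
  assert (Hpr : peeks_right L0 R0 z v u)
    by (unfold peeks_right, peeks, cmeets; repeat split; lra).
  destruct (proj1 (proj2 Hret) u v z Huv0 Hpr); lra.
Qed.

Lemma left_peeker_Rr_eq (u v z : X) :
  cstrict_sub L Rr u v -> prec z u -> ~ prec z v -> Rr z = L v.
Proof.
  intros Huv Hzu Hzv.
  destruct (inner_strict Hrep0 Huv), (inner_strict Hrep Huv).
  pose proof (proj1 Hrep u); pose proof (proj1 Hrep0 u); pose proof (proj1 Hrep z).
  pose proof (retracted_sub Hret v).
  assert (Hvz : ~ prec v z).
  { intro Hvz; apply (proj2 Hrep) in Hvz; apply (proj2 Hrep) in Hzu; lra. }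
  pose proof (proj1 (closed_rep_nprec Hrep z v) Hzv).
  apply (closed_rep_nprec Hrep0) in Hvz; apply (closed_rep_nprec Hrep0) in Hzv.
  apply (proj2 Hrep0) in Hzu.
  assert (Huv0 : cstrict_sub L0 R0 u v) by (unfold cstrict_sub; lra).
  assert (Hpl : peeks_left L0 R0 z v u)
    by (unfold peeks_left, peeks, cmeets; repeat split; lra).
  destruct (proj1 Hret u v z Huv0 Hpl); lra.
Qed.

Lemma inner_prec_right (x v y : X) :
  cstrict_sub L Rr x v -> prec x y -> Rr v <= L y.
Proof.
  intros Hxv Hxy; destruct (classic (prec v y)) as [Hvy|Hvy].
  - apply (proj2 Hrep) in Hvy; lra.
  - rewrite (right_peeker_L_eq Hxv Hxy Hvy); lra.
Qed.

Lemma inner_prec_left (x y w : X) :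
  cstrict_sub L Rr y w -> prec x y -> Rr x <= L w.
Proof.
  intros Hyw Hxy; destruct (classic (prec x w)) as [Hxw|Hxw].
  - apply (proj2 Hrep) in Hxw; lra.
  - rewrite (left_peeker_Rr_eq Hyw Hxy Hxw); lra.
Qed.

Hypothesis Hinside : no_two_inside L Rr.
Hypothesis Houtside : no_two_outside L Rr.
Hypothesis HnoZ : ~ contains_Z prec.

Lemma straddler_excluded (y w z : X) :
  cstrict_sub L Rr y w -> L w < L z -> L z < L y -> False.
Proof.
  intros Hyw Hwz Hzy; destruct (inner_strict Hrep Hyw).
  pose proof (proj1 Hrep z); pose proof (proj1 Hrep y).
  destruct (Rle_dec (Rr z) (Rr w)).
  - apply Hinside; exists w, z, y; split; [intro e; subst; lra|].
    split; [unfold cstrict_sub; lra | exact Hyw].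
  - apply Houtside; exists y, w, z; split; [intro e; subst; lra|].
    split; [exact Hyw | unfold cstrict_sub; lra].
Qed.

Lemma crossing_inclusions_contain_Z (a x v y w d : X) :
  L v < L x -> Rr x < Rr v -> L w < L y -> Rr y < Rr w ->
  Rr x = L w -> Rr v < Rr w -> L y <= Rr v -> Rr a = L v -> L d = Rr w ->
  contains_Z prec.
Proof.
  destruct Hrep as [Hw Hp]; intros.
  pose proof (Hw a); pose proof (Hw x); pose proof (Hw v).
  pose proof (Hw y); pose proof (Hw w); pose proof (Hw d).
  apply (contains_Z_of_embedding (f := fun p => match p with
    | Za => a | Zb => x | Zc => y | Zd => d | Zx => v | Zy => w end)).
  intros p q; rewrite Hp; destruct p, q; simpl; split; intro; solve [lra | tauto].
Qed.

Lemma inner_prec_inner (x v y w : X) :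
  cstrict_sub L Rr x v -> cstrict_sub L Rr y w -> prec x y -> prec x w.
Proof.
  intros Hxv Hyw Hxy; apply NNPP; intro Hxw.
  pose proof (left_peeker_Rr_eq Hyw Hxy Hxw) as Exw.
  destruct (inner_strict Hrep Hxv), (inner_strict Hrep Hyw).
  pose proof (proj1 Hrep x); pose proof (proj1 Hrep y).
  pose proof (proj2 Hrep x y) as [Hxy' _]; specialize (Hxy' Hxy).
  destruct (Rle_dec (Rr w) (Rr v)).
  { apply Hinside; exists v, x, w; split; [intro e; subst; lra|].
    split; [exact Hxv | unfold cstrict_sub; lra]. }
  destruct (Hpeek Hxv) as [[a [Ha _]] [b [Hb _]]].
  destruct (Rlt_dec (Rr v) (L y)).
  - destruct (peeks_right_prec Hb) as [Hxb Hvb].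
    pose proof (right_peeker_L_eq Hxv Hxb Hvb).
    apply (straddler_excluded Hyw (z := b)); lra.
  - destruct (peeks_left_prec Ha) as [Hax Hav].
    destruct (Hpeek Hyw) as [_ [d [Hd _]]].
    destruct (peeks_right_prec Hd) as [Hyd Hwd].
    apply HnoZ, (crossing_inclusions_contain_Z (a := a) (x := x) (v := v)
                   (y := y) (w := w) (d := d)); try lra.
    + exact (left_peeker_Rr_eq Hxv Hax Hav).
    + exact (right_peeker_L_eq Hyw Hyd Hwd).
Qed.

Variable J : X -> oc_interval.
Hypothesis HJin : forall u v, cstrict_sub L Rr u v -> J u = OC true (L v) (Rr v).
Hypothesis HJout : forall z, ~ (exists v, cstrict_sub L Rr z v) ->
  J z = OC false (L z) (Rr z).

Lemma J_cases (x : X) :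
  (exists v, cstrict_sub L Rr x v /\ J x = OC true (L v) (Rr v)) \/
  (~ (exists v, cstrict_sub L Rr x v) /\ J x = OC false (L x) (Rr x)).
Proof.
  destruct (classic (exists v, cstrict_sub L Rr x v)) as [[v Hxv]|Hn].
  - left; exists v; auto.
  - right; auto.
Qed.

Lemma J_bounds (x : X) :
  if oc_open (J x) then oc_l (J x) < L x /\ Rr x < oc_r (J x)
  else oc_l (J x) <= L x /\ Rr x <= oc_r (J x).
Proof.
  destruct (J_cases x) as [[v [Hxv ->]]|[_ ->]]; simpl.
  - exact (inner_strict Hrep Hxv).
  - lra.
Qed.

Lemma J_wf (x : X) : oc_wf (J x).
Proof.
  pose proof (J_bounds x); pose proof (proj1 Hrep x).
  unfold oc_wf; destruct (oc_open (J x)); lra.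
Qed.

Lemma J_prec_iff (x y : X) : prec x y <->
  (if oc_open (J x) || oc_open (J y) then oc_r (J x) <= oc_l (J y)
   else oc_r (J x) < oc_l (J y)).
Proof.
  split.
  - intro Hxy.
    destruct (J_cases x) as [[v [Hxv ->]]|[_ ->]],
             (J_cases y) as [[w [Hyw ->]]|[_ ->]]; simpl.
    + exact (inner_prec_right Hxv (inner_prec_inner Hxv Hyw Hxy)).
    + exact (inner_prec_right Hxv Hxy).
    + exact (inner_prec_left Hyw Hxy).
    + exact (proj1 (proj2 Hrep x y) Hxy).
  - intro H; apply (proj2 Hrep).
    pose proof (J_bounds x); pose proof (J_bounds y).
    destruct (oc_open (J x)), (oc_open (J y)); simpl in H; lra.
Qed.

Lemma J_not_strict_sub (u v : X) : ~ oc_strict_sub (J u) (J v).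
Proof.
  intros [Hsub Hne].
  destruct (oc_sub_endpoints (J_wf u) Hsub) as [Hl [Hr Hopen]].
  pose proof (proj1 Hrep u); pose proof (proj1 Hrep v).
  destruct (J_cases u) as [[a [Hua Eu]]|[Hun Eu]],
           (J_cases v) as [[b [Hvb Ev]]|[Hvn Ev]];
    rewrite Eu Ev in Hl Hr Hopen Hne; simpl in Hl, Hr, Hopen, Hne.
  - destruct (inner_strict Hrep Hua), (inner_strict Hrep Hvb).
    apply Houtside; exists u, a, b; split; [intro e; subst; tauto|].
    split; [exact Hua | unfold cstrict_sub; lra].
  - destruct (inner_strict Hrep Hua).
    apply Hinside; exists v, a, u; split; [intro e; subst; lra|].
    unfold cstrict_sub; lra.
  - destruct (Hopen erefl erefl).
    apply Hun; exists b; unfold cstrict_sub; lra.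
  - apply Hun; exists v; unfold cstrict_sub; auto.
Qed.

Lemma J_strict_oc_rep : strict_oc_rep prec J.
Proof.
  split; [split|].
  - exact J_wf.
  - intros x y; rewrite (oc_before_iff (J_wf x) (J_wf y)); exact (J_prec_iff x y).
  - exact J_not_strict_sub.
Qed.

End Retraction.

Theorem proposition15 (X : finType) (prec : X -> X -> Prop)
  (Hpo : strict_poset prec) (Htf : twin_free prec) (Hio : interval_order prec)
  (HnoZ : ~ contains_Z prec)
  (L Rr : X -> R) (Hrep : closed_rep prec L Rr) (Hgood : good_rep L Rr)
  (Hretr : exists L0 R0 : X -> R, closed_rep prec L0 R0 /\ good_rep L0 R0 /\
             retracted_from L0 R0 L Rr)
  (J : X -> oc_interval)
  (HJin : forall u v, cstrict_sub L Rr u v -> J u = OC true (L v) (Rr v))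
  (HJout : forall z, ~ (exists v, cstrict_sub L Rr z v) -> J z = OC false (L z) (Rr z)) :
  strict_oc_rep prec J.
Proof.
  destruct Hretr as [L0 [R0 [Hrep0 [_ Hret]]]].
  destruct Hgood as [Hinside [Houtside Hpeek]].
  exact (J_strict_oc_rep Hrep Hpeek Hrep0 Hret Hinside Houtside HnoZ HJin HJout).
Qed.
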